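(* Let $G$ be a graph with $n$ vertices. Then \[\chi(G) \leq \frac{1}{2} \left(\omega(G) + \frac{\Delta(G) + 1 + n}{2} \right) - \frac{\eta(G)}{4}.\]
   Context: All graphs are finite and simple with non-empty vertex set. $\chi$ is the chromatic number, $\omega$ the clique number, $\Delta$ the maximum degree. The chromatic excess of $G$ is $\eta(G) = \max_{H} \left(|H| - 3\chi(H)\right)$, where the maximum ranges over all induced subgraphs $H$ of $G$ with non-empty vertex set and $|H|$ is the number of vertices of $H$. *)

From mathcomp Require Import all_boot all_order all_algebra.
Set Implicit Arguments. Unset Strict Implicit. Unset Printing Implicit Defensive.
Import GRing.Theory Num.Theory.

(* A finite simple graph: vertex type T : finType, adjacency e : rel T,
   symmetric and irreflexive (hypotheses stated in the theorem). *)

Section Graph.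
Variables (T : finType) (e : rel T).

Definition colorable_on (S : {set T}) (k : nat) : bool :=
  [exists f : {ffun T -> 'I_#|T|},
     [forall x in S, f x < k] &&
     [forall x in S, forall y in S, e x y ==> (f x != f y)]].

(* chromatic number of G[S]; #|T| colours always suffice, so this is the
   least k <= #|T| such that G[S] is k-colourable *)
Definition chi_on (S : {set T}) : nat :=
  \big[minn/#|T|]_(k < #|T|.+1 | colorable_on S k) (k : nat).

Definition chi : nat := chi_on setT.

Definition is_clique (K : {set T}) : bool :=
  [forall x in K, forall y in K, (x != y) ==> e x y].

Definition omega : nat := \max_(K : {set T} | is_clique K) #|K|.

Definition deg (x : T) : nat := #|[set y | e x y]|.

Definition Delta : nat := \max_(x : T) deg x.

Definition eta : int :=
  (\big[Order.max/(#|T|%:Z - 3 * (chi_on setT)%:Z)]_(S : {set T} | S != set0)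
     (#|S|%:Z - 3 * (chi_on S)%:Z))%R.

End Graph.

From mathcomp Require Import all_boot all_order all_algebra.
From mathcomp Require Import zify lra.
Import GRing.Theory Num.Theory.
Set Implicit Arguments. Unset Strict Implicit. Unset Printing Implicit Defensive.

(* Let H be a largest nonempty vertex set with |H| - 3 chi(H) = eta, and let
   F be its complement.  Extremality gives two facts: every vertex of F sees
   all chi(H) colour classes of an optimal colouring of H (otherwise adding it
   raises the excess), so deg_F(w) + chi(H) <= Delta; and F contains no
   independent triple (otherwise adding one keeps the excess and enlarges H).
   Since chi(G) <= chi(H) + chi(F), it remains to bound chi(F) for a graph with
   no independent triple, i.e. whose complement is triangle-free.  Colouring
   F by a matching M of its complement gives chi(F) <= |F| - |M|, and a
   Gallai-type argument on maximum matchings of triangle-free graphs produces a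
   vertex w and an independent set I of the complement (a clique of G) with
   2 * (number of exposed vertices) + deg(w) <= 2 |I|.  This yields
   4 chi(F) <= 2 omega + |F| + 1 + deg_F(w), and the theorem follows by adding
   up. *)

Lemma order_dvdn_iter (T : finType) (h : T -> T) m x :
  injective h -> iter m h x = x -> order h x %| m.
Proof.
move=> hinj hm; apply/eqP.
have iter_mul_order q : iter (q * order h x) h x = x.
  by elim: q => // q IH; rewrite mulSn iterD IH (iter_order hinj).
move: hm; rewrite {1}(divn_eq m (order h x)) addnC iterD iter_mul_order => hr.
by have := findex_iter (ltn_pmod m (order_gt0 h x)); rewrite hr findex0.
Qed.

Section AlternatingWalk.
Variables (T : finType) (f g : T -> T).
Hypotheses (fK : involutive f) (gK : involutive g).

Definition altstep x := f (g x).

Lemma altstep_inj : injective altstep.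
Proof. by move=> x y /(inv_inj fK) /(inv_inj gK). Qed.

Lemma iter_altstep_f i x0 : f x0 = x0 -> iter i altstep (f (iter i altstep x0)) = x0.
Proof.
move=> fx0; elim: i => [|i IH] //.
have back y : altstep (f (altstep y)) = f y by rewrite /altstep fK gK.
by rewrite [X in f X]iterS iterSr back.
Qed.

Lemma iter_altstep_g i x0 :
  f x0 = x0 -> iter i.+1 altstep (g (iter i altstep x0)) = x0.
Proof.
move=> fx0; elim: i => [|i IH]; first by rewrite /= /altstep gK.
have back y : altstep (g (altstep y)) = g y by rewrite /altstep gK fK.
by rewrite [X in g X]iterS iterSr back.
Qed.

Lemma fconnect_altstep_f x0 y :
  f x0 = x0 -> fconnect altstep x0 y -> fconnect altstep x0 (f y).
Proof.
move=> fx0 x0y; rewrite (fconnect_sym altstep_inj).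
have := iter_altstep_f (findex altstep x0 y) fx0.
by rewrite (iter_findex x0y) => <-; rewrite fconnect_iter.
Qed.

Lemma fconnect_altstep_g x0 y :
  f x0 = x0 -> fconnect altstep x0 y -> fconnect altstep x0 (g y).
Proof.
move=> fx0 x0y; rewrite (fconnect_sym altstep_inj).
have := iter_altstep_g (findex altstep x0 y) fx0.
by rewrite (iter_findex x0y) => <-; rewrite fconnect_iter.
Qed.

(* A fixed point of f or g at position i > 0 of the cycle through the fixed
   point x0 of f forces the cycle length to be 2i or 2i + 1. *)
Lemma altstep_fixpoint_uniq x0 y z : f x0 = x0 ->
  fconnect altstep x0 y -> fconnect altstep x0 z -> y != x0 -> z != x0 ->
  f y = y \/ g y = y -> f z = z \/ g z = z -> y = z.
Proof.
move=> fx0 x0y x0z yx0 zx0 fixy fixz.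
set L := order altstep x0.
have half w : fconnect altstep x0 w -> w != x0 -> f w = w \/ g w = w ->
    findex altstep x0 w = L./2.
  move=> x0w wx0 fixw; set i := findex altstep x0 w.
  have iL : i < L := findex_max x0w.
  have i0 : i != 0 by rewrite findex_eq0 eq_sym.
  have iw := iter_findex x0w; rewrite -/i in iw.
  case: fixw => fixw.
  - have := iter_altstep_f i fx0; rewrite iw fixw -iw -iterD.
    move=> /(order_dvdn_iter altstep_inj) /dvdnP [q hq].
    have q1 : q = 1 by nia.
    by rewrite q1 mul1n in hq; rewrite /L -hq; lia.
  - have := iter_altstep_g i fx0; rewrite iw fixw -iw -iterD.
    move=> /(order_dvdn_iter altstep_inj) /dvdnP [q hq].
    have q1 : q = 1 by nia.
    by rewrite q1 mul1n in hq; rewrite /L -hq; lia.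
have := half y x0y yx0 fixy; rewrite -(half z x0z zx0 fixz) => eq_yz.
by rewrite -(iter_findex x0y) eq_yz (iter_findex x0z).
Qed.

End AlternatingWalk.

Section Matching.
Variables (T : finType) (a : rel T).
Hypotheses (a_sym : symmetric a) (a_irr : irreflexive a).

(* A matching of the subgraph induced by S is an involution of T whose moved
   points lie in S and are adjacent to their image; the vertices of S it fixes
   are the exposed ones. *)
Definition matching (S : {set T}) (f : {ffun T -> T}) : bool :=
  [forall x, f (f x) == x] && [forall x, (f x != x) ==> (x \in S) && a x (f x)].

Definition exposed (S : {set T}) (f : {ffun T -> T}) := [set x in S | f x == x].

Definition maximum_matching (S : {set T}) (f : {ffun T -> T}) : bool :=
  matching S f &&
  [forall g, matching S g ==> (#|exposed S f| <= #|exposed S g|)].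

Section MatchingTheory.
Variables (S : {set T}) (f : {ffun T -> T}).
Hypothesis f_match : matching S f.

Lemma matchingK : involutive f.
Proof. by move=> x; case/andP: f_match => /forallP /(_ x) /eqP. Qed.

Lemma matching_edge x : f x != x -> (x \in S) && a x (f x).
Proof. by case/andP: f_match => _ /forallP /(_ x) /implyP. Qed.

Lemma matching_mem x : f x != x -> x \in S.
Proof. by move/matching_edge/andP => []. Qed.

Lemma matching_adj x : f x != x -> a x (f x).
Proof. by move/matching_edge/andP => []. Qed.

Lemma matching_image_mem x : f x != x -> f x \in S.
Proof. by move=> fx; apply: matching_mem; rewrite matchingK eq_sym. Qed.

Lemma matching_fixed x : x \notin S -> f x = x.
Proof. by move=> xS; apply/eqP; apply: contraR xS => /matching_mem. Qed.

Lemma matching_inj : injective f.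
Proof. exact: inv_inj matchingK. Qed.

Lemma matching_closed x : x \in S -> f x \in S.
Proof. by move=> xS; case: (eqVneq (f x) x) => [->|/matching_image_mem]. Qed.

Lemma matching_subset (S' : {set T}) : S \subset S' -> matching S' f.
Proof.
move=> sSS'; apply/andP; split; first by apply/forallP => x; rewrite matchingK.
apply/forallP => x; apply/implyP => fx; rewrite matching_adj // andbT.
exact: (subsetP sSS' _ (matching_mem fx)).
Qed.

End MatchingTheory.

Lemma matching_id S : matching S [ffun x => x].
Proof. by apply/andP; split; apply/forallP => x; rewrite !ffunE ?eqxx. Qed.

Lemma maximum_matchingW S f : maximum_matching S f -> matching S f.
Proof. by case/andP. Qed.

Lemma maximum_matching_min S f g :
  maximum_matching S f -> matching S g -> #|exposed S f| <= #|exposed S g|.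
Proof. by case/andP => _ /forallP /(_ g) /implyP. Qed.

Lemma maximum_matchingI S f : matching S f ->
  (forall g, matching S g -> #|exposed S f| <= #|exposed S g|) ->
  maximum_matching S f.
Proof. by move=> fS fmin; rewrite /maximum_matching fS; apply/forall_inP. Qed.

Lemma exists_maximum_matching S : exists f, maximum_matching S f.
Proof.
case: (arg_minnP (fun f => #|exposed S f|) (matching_id S)) => f fS fmin.
by exists f; apply: maximum_matchingI.
Qed.

Definition matched_reps (S : {set T}) (f : {ffun T -> T}) :=
  [set x in S | (f x != x) && (enum_rank x < enum_rank (f x))].

Lemma matched_reps_partner S f x : matching S f -> x \in S -> f x != x ->
  x \notin matched_reps S f -> f x \in matched_reps S f.
Proof.
move=> fS xS fx; rewrite !inE xS fx /= -leqNgt leq_eqVlt => /orP [|lt].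
  by move/eqP/val_inj/enum_rank_inj => fxx; rewrite fxx eqxx in fx.
by rewrite (matching_image_mem fS fx) (matchingK fS) lt eq_sym fx.
Qed.

Lemma card_matching S f :
  matching S f -> #|S| = #|exposed S f| + 2 * #|matched_reps S f|.
Proof.
move=> fS; set M := matched_reps S f.
set C := [set x in S | f x != x].
set M' := [set x in S | (f x != x) && (enum_rank (f x) < enum_rank x)].
have -> : #|S| = #|exposed S f| + #|C|.
  by rewrite -(cardsID [set x | f x == x] S); congr (_ + _);
    apply: eq_card => x; rewrite !inE andbC.
have -> : #|C| = #|M| + #|M'|.
  rewrite -(cardsID M C); congr (_ + _); apply: eq_card => x; rewrite !inE.
    by case: (x \in S); case: (f x != x); rewrite ?andbF.
  case: (x \in S) => //=; case fx: (f x != x) => //=.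
  rewrite -leqNgt leq_eqVlt (_ : (enum_rank (f x) == enum_rank x :> nat) = false) ?andbT //.
  by apply/negbTE; move: fx; apply: contra => /eqP /val_inj /enum_rank_inj ->.
suff -> : #|M'| = #|M| by rewrite addnn -mul2n.
rewrite -(card_imset _ (matching_inj fS)); apply: eq_card => x.
apply/imsetP/idP => [[y] | ].
  rewrite !inE => /and3P [yS fy lt] ->.
  by rewrite (matchingK fS) lt (matching_image_mem fS fy) eq_sym fy.
rewrite !inE => /and3P [xS fx lt]; exists (f x); last by rewrite (matchingK fS).
by rewrite !inE (matchingK fS) lt (matching_image_mem fS fx) eq_sym fx.
Qed.

Lemma odd_exposed S f : matching S f -> odd #|exposed S f| = odd #|S|.
Proof. by move=> fS; rewrite (card_matching fS) oddD mul2n odd_double addbF. Qed.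

Lemma matching_labelling S f : matching S f ->
  exists c : T -> nat,
    (forall x, x \in S -> c x < #|exposed S f| + #|matched_reps S f|) /\
    (forall x y, x \in S -> y \in S -> c x = c y -> x = y \/ y = f x).
Proof.
move=> fS; set R := exposed S f :|: matched_reps S f.
have cardR : #|R| = #|exposed S f| + #|matched_reps S f|.
  rewrite cardsU; suff -> : exposed S f :&: matched_reps S f = set0.
    by rewrite cards0 subn0.
  by apply/setP => x; rewrite !inE; case: (f x == x); rewrite /= ?andbF.
pose r x := if x \in R then x else f x.
have rR x : x \in S -> r x \in R.
  move=> xS; rewrite /r; case: ifP => // /negbT.
  rewrite in_setU negb_or => /andP [xE xM].
  have fx : f x != x by apply: contraNneq xE => fxx; rewrite inE xS fxx eqxx.
  by rewrite in_setU (matched_reps_partner fS) ?orbT.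
exists (fun x => index (r x) (enum R)); split.
  by move=> x xS; rewrite -cardR cardE index_mem mem_enum rR.
move=> x y xS yS /(congr1 (nth x (enum R))).
rewrite !nth_index ?mem_enum ?rR // /r.
case: ifP => _; case: ifP => _.
- by left.
- by move=> ->; right; rewrite (matchingK fS).
- by move=> <-; right.
- by move/(matching_inj fS) ->; left.
Qed.

Lemma matching_augment S f x y : matching S f -> x \in S -> y \in S -> x != y ->
  f x = x -> f y = y -> a x y ->
  exists g, matching S g /\ #|exposed S g| + 2 = #|exposed S f|.
Proof.
move=> fS xS yS xy fx fy axy.
pose g := [ffun z => if z == x then y else if z == y then x else f z].
have yx : (y == x) = false by apply/negbTE; rewrite eq_sym.
have gE z : z != x -> z != y -> g z = f z.
  by move=> zx zy; rewrite ffunE (negbTE zx) (negbTE zy).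
have fzx z : z != x -> f z != x.
  by apply: contra => /eqP fz; rewrite -(matchingK fS z) fz fx.
have fzy z : z != y -> f z != y.
  by apply: contra => /eqP fz; rewrite -(matchingK fS z) fz fy.
have gS : matching S g.
  apply/andP; split; apply/forallP => z.
  - case: (eqVneq z x) => [->|zx]; first by rewrite !ffunE eqxx yx eqxx.
    case: (eqVneq z y) => [->|zy]; first by rewrite !ffunE yx eqxx eqxx.
    by rewrite (gE _ zx zy) (gE _ (fzx _ zx) (fzy _ zy)) (matchingK fS).
  - apply/implyP => gz.
    case: (eqVneq z x) => [->|zx]; first by rewrite ffunE eqxx xS axy.
    case: (eqVneq z y) => [->|zy]; first by rewrite ffunE yx eqxx yS a_sym.
    by rewrite (gE _ zx zy) in gz *; apply: matching_edge fS _ gz.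
exists g; split => //.
have -> : exposed S g = exposed S f :\: [set x; y].
  apply/setP => z; rewrite !inE.
  case: (eqVneq z x) => [->|zx]; first by rewrite ffunE eqxx eq_sym (negbTE xy) andbF.
  case: (eqVneq z y) => [->|zy]; first by rewrite ffunE yx eqxx (negbTE xy) andbF.
  by rewrite (gE _ zx zy) andbC.
have xy_exposed : [set x; y] \subset exposed S f.
  by apply/subsetP => z; rewrite !inE => /orP [] /eqP ->; rewrite ?xS ?yS ?fx ?fy eqxx.
have := subset_leq_card xy_exposed.
by rewrite cardsD (setIidPr xy_exposed) cards2 xy; lia.
Qed.

Lemma maximum_exposed_indep S f x y : maximum_matching S f ->
  x \in exposed S f -> y \in exposed S f -> ~~ a x y.
Proof.
move=> fmax; rewrite !inE => /andP [xS /eqP fx] /andP [yS /eqP fy].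
apply/negP => axy.
have xy : x != y by apply: contraTneq axy => ->; rewrite a_irr.
have [g [gS exposed_g]] := matching_augment (maximum_matchingW fmax) xS yS xy fx fy axy.
by have := maximum_matching_min fmax gS; rewrite -exposed_g; lia.
Qed.

Definition patch (P : {set T}) (f g : {ffun T -> T}) :=
  [ffun x => if x \in P then f x else g x].

Lemma patchE P f g x : patch P f g x = if x \in P then f x else g x.
Proof. by rewrite ffunE. Qed.

Lemma matching_patch S f g (P : {set T}) : matching S f -> matching S g ->
  (forall x, x \in P -> f x \in P) -> (forall x, x \in P -> g x \in P) ->
  matching S (patch P f g) /\
  #|exposed S (patch P f g)| = #|exposed S f :&: P| + #|exposed S g :\: P|.
Proof.
move=> fS gS fP gP.
have gN x : x \notin P -> g x \notin P.
  by apply: contra => /gP; rewrite (matchingK gS).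
split.
  apply/andP; split; apply/forallP => x.
  - rewrite !patchE; case xP: (x \in P).
      by rewrite (fP _ xP) (matchingK fS).
    by rewrite (negbTE (gN _ (negbT xP))) (matchingK gS).
  - rewrite patchE; case: ifP => _; apply/implyP;
      [exact: matching_edge fS x | exact: matching_edge gS x].
rewrite -(cardsID P (exposed S (patch P f g))); congr (_ + _);
  apply: eq_card => x; rewrite !inE patchE; by case: (x \in P); rewrite ?andbT ?andbF.
Qed.

Lemma matching_union (S1 S2 : {set T}) f1 f2 : [disjoint S1 & S2] ->
  matching S1 f1 -> matching S2 f2 ->
  matching (S1 :|: S2) (patch S1 f1 f2) /\
  #|exposed (S1 :|: S2) (patch S1 f1 f2)| = #|exposed S1 f1| + #|exposed S2 f2|.
Proof.
move=> S12 f1S f2S.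
have notS2 x : x \in S1 -> x \notin S2 by move=> xS1; rewrite (disjointFr S12 xS1).
have f2S1 x : x \in S1 -> f2 x \in S1.
  by move=> xS1; rewrite (matching_fixed f2S (notS2 x xS1)).
have [pS ->] := matching_patch (matching_subset f1S (subsetUl S1 S2))
  (matching_subset f2S (subsetUr S1 S2)) (matching_closed f1S) f2S1.
split => //; congr (_ + _); apply: eq_card => x; rewrite !inE.
  by case xS1: (x \in S1); rewrite ?andbF ?andbT.
case xS1: (x \in S1) => //=.
by rewrite (negbTE (notS2 x xS1)) (matching_fixed f2S (notS2 x xS1)) eqxx.
Qed.

End Matching.

Section Gallai.
Variables (T : finType) (a : rel T).
Hypotheses (a_sym : symmetric a) (a_irr : irreflexive a).

Definition adj_in (S : {set T}) : rel T := fun x y => [&& x \in S, y \in S & a x y].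

Lemma adj_in_path_last (S : {set T}) x p :
  x \in S -> path (adj_in S) x p -> last x p \in S.
Proof.
by elim: p x => //= y p IHp x _ /andP [/and3P [_ yS _]]; apply: IHp.
Qed.

(* Among the maximum matchings exposing t, g agrees most with f; swapping f
   and g along the alternating cycle of y would produce a better one unless
   that cycle passes through t. *)
Lemma alternating_orbit_exposed (S : {set T}) (f g : {ffun T -> T}) y t :
  maximum_matching a S f -> maximum_matching a S g ->
  f y = y -> g y != y -> g t = t ->
  (forall h : {ffun T -> T}, maximum_matching a S h && (h t == t) ->
      #|[set x | h x == f x]| <= #|[set x | g x == f x]|) ->
  fconnect (altstep f g) y t.
Proof.
move=> fmax gmax fy gy gt gbest.
have fS := maximum_matchingW fmax; have gS := maximum_matchingW gmax.
have fK := matchingK fS; have gK := matchingK gS.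
apply/negPn/negP => not_yt.
set P := [set z | fconnect (altstep f g) y z].
have fP z : z \in P -> f z \in P by rewrite !inE; apply: fconnect_altstep_f.
have gP z : z \in P -> g z \in P by rewrite !inE; apply: fconnect_altstep_g.
have [fgS fg_exposed] := matching_patch fS gS fP gP.
have [gfS gf_exposed] := matching_patch gS fS gP fP.
have := maximum_matching_min fmax gfS; have := maximum_matching_min gmax fgS.
rewrite fg_exposed gf_exposed -(cardsID P (exposed S f)) -(cardsID P (exposed S g)).
move=> le1 le2.
have fg_max : maximum_matching a S (patch P f g).
  apply: maximum_matchingI => // h hS.
  apply: leq_trans (maximum_matching_min gmax hS).
  by rewrite fg_exposed -(cardsID P (exposed S g)); lia.
have fgt : patch P f g t = t by rewrite patchE (negbTE (_ : t \notin P)) ?inE.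
have := gbest (patch P f g); rewrite fg_max fgt eqxx => /(_ isT).
apply/negP; rewrite -ltnNge; apply: proper_card; apply/properP; split.
  by apply/subsetP => x; rewrite !inE patchE; case: ifP => // _ _; exact: eqxx.
have yP : y \in P by rewrite inE connect0.
by exists y; rewrite !inE ?patchE ?yP ?fy ?eqxx.
Qed.

(* Induction along an adj_in-path from x0 to another vertex exposed by f:
   either some maximum matching exposes both ends of the path minus its first
   edge, or the second vertex t of the path is covered by every maximum
   matching, since an alternating cycle through x0 cannot contain the
   endpoint (a fixed point of f) and t (a fixed point of g) at once. *)
Lemma exposed_path_covered (S : {set T}) p :
  forall (f : {ffun T -> T}) x0, maximum_matching a S f ->
  x0 \in S -> f x0 = x0 -> f (last x0 p) = last x0 p -> last x0 p != x0 ->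
  path (adj_in S) x0 p ->
  exists2 t, t \in S & forall g, maximum_matching a S g -> g t != t.
Proof.
elim: p => [|t p IH] f x0 fmax x0S fx0 /= fb bx0; first by rewrite eqxx in bx0.
case/andP=> /and3P [_ tS x0t] tp.
set b := last t p in fb bx0 tp *.
have bS : b \in S by apply: adj_in_path_last tS tp.
have x0t' : x0 != t by apply: contraTneq x0t => ->; rewrite a_irr.
have [bt|bt] := eqVneq b t.
  have := maximum_exposed_indep a_sym a_irr fmax (x:=x0) (y:=t).
  by rewrite !inE x0S tS fx0 -bt fb !eqxx bt x0t => /(_ isT isT).
have [|none] := boolP [exists g : {ffun T -> T},
                         [&& maximum_matching a S g, g t == t & g b == b]].
  case/existsP=> g /and3P [gmax /eqP gt /eqP gb].
  by apply: (IH g t).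
exists t => // g gmax; apply/negP => /eqP gt.
have g_exposes_t : maximum_matching a S g && (g t == t) by rewrite gmax gt eqxx.
have [g' /andP [g'max /eqP g't] g'best] :=
  @arg_maxnP _ g (fun h => maximum_matching a S h && (h t == t))
    (fun h => #|[set x | h x == f x]|) g_exposes_t.
have g'b : g' b != b.
  by apply: contraNneq none => g'b; apply/existsP; exists g'; rewrite g'max g't g'b !eqxx.
have g'x0 : g' x0 != x0.
  apply/negP => /eqP g'x0.
  have := maximum_exposed_indep a_sym a_irr g'max (x:=x0) (y:=t).
  by rewrite !inE x0S tS g'x0 g't !eqxx x0t => /(_ isT isT).
have fK := matchingK (maximum_matchingW fmax).
have g'K := matchingK (maximum_matchingW g'max).
have x0_t := alternating_orbit_exposed fmax g'max fx0 g'x0 g't g'best.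
have b_t := alternating_orbit_exposed fmax g'max fb g'b g't g'best.
have x0_b : fconnect (altstep f g') x0 b.
  by apply: connect_trans x0_t _; rewrite (fconnect_sym (altstep_inj fK g'K)).
have := altstep_fixpoint_uniq fK g'K fx0 x0_b x0_t bx0 _ (or_introl fb) (or_intror g't).
by rewrite eq_sym in x0t' => /(_ x0t') bt'; rewrite bt' eqxx in bt.
Qed.

Lemma gallai_exposed_le1 (S : {set T}) f : maximum_matching a S f ->
  (forall x y, x \in S -> y \in S -> connect (adj_in S) x y) ->
  (forall v, v \in S -> exists g, maximum_matching a S g /\ g v = v) ->
  #|exposed S f| <= 1.
Proof.
move=> fmax S_conn S_missed; rewrite leqNgt; apply/negP.
case/card_gt1P=> x0 [b [x0E bE bx0]]; rewrite eq_sym in bx0.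
move: x0E bE; rewrite !inE => /andP [x0S /eqP fx0] /andP [bS /eqP fb].
have /connectP [p x0p b_last] := S_conn x0 b x0S bS.
rewrite b_last in fb bx0.
have [t tS t_covered] := exposed_path_covered fmax x0S fx0 fb bx0 x0p.
have [g [gmax gt]] := S_missed t tS.
by have := t_covered g gmax; rewrite gt eqxx.
Qed.

End Gallai.

Lemma odd_eq_leq_add2 m n : m <= n -> odd m = odd n -> m != n -> m + 2 <= n.
Proof.
move=> le_mn odd_mn ne_mn.
have : odd (n - m) = false by rewrite oddB // odd_mn addbb.
have : n - m != 0 by rewrite subn_eq0 -ltnNge ltn_neqAle ne_mn le_mn.
by case: (n - m) (subnK le_mn) => [|[|k]] //= <- _ _; lia.
Qed.

Section TriangleFree.
Variables (T : finType) (a : rel T).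
Hypotheses (a_sym : symmetric a) (a_irr : irreflexive a).

Definition deg_in (S : {set T}) w := #|[set y in S | a w y]|.

Definition indep (I : {set T}) := [forall x in I, forall y in I, ~~ a x y].

Definition triangle_free (S : {set T}) := forall x y z,
  x \in S -> y \in S -> z \in S -> a x y -> a x z -> ~~ a y z.

Lemma indepP (I : {set T}) : reflect {in I &, forall x y, ~~ a x y} (indep I).
Proof.
apply: (iffP forall_inP) => [indepI x y xI yI | indepI x xI].
  by have /forall_inP := indepI x xI; apply.
by apply/forall_inP => y; apply: indepI.
Qed.

Definition exposure_bound (S : {set T}) := exists f w (I : {set T}),
  [/\ matching a S f, w \in S, I \subset S, indep I &
      2 * #|exposed S f| + deg_in S w <= 2 * #|I|].

Lemma card_exposed_setD1 (S : {set T}) v f : v \in S -> matching a (S :\ v) f ->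
  #|exposed S f| = #|exposed (S :\ v) f|.+1.
Proof.
move=> vS fS.
have fv : f v = v by apply: (matching_fixed fS); rewrite !inE eqxx.
rewrite (cardsD1 v (exposed S f)) !inE vS fv eqxx add1n; congr _.+1.
by apply: eq_card => x; rewrite !inE andbA.
Qed.

Lemma exposure_bound_disconnected (S S1 : {set T}) : S1 \proper S ->
  (forall x y, x \in S1 -> y \in S :\: S1 -> ~~ a x y) ->
  exposure_bound S1 -> exposure_bound S.
Proof.
move=> ltS1S no_edge [f1 [w [I1 [f1S wS1 I1S1 I1_indep f1_bound]]]].
have leS1S := proper_sub ltS1S.
set S2 := S :\: S1.
have [f2 f2max] := exists_maximum_matching a S2.
have f2S := maximum_matchingW f2max.
have S12 : [disjoint S1 & S2].
  by rewrite disjoints_subset; apply/subsetP => x xS1; rewrite !inE xS1.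
have [fS fS_exposed] := matching_union S12 f1S f2S.
have S1S2 : S1 :|: S2 = S.
  by apply/setP => x; rewrite !inE; case: (boolP (x \in S1)) => // /(subsetP leS1S) ->.
rewrite S1S2 in fS fS_exposed.
set I2 := exposed S2 f2.
have I2S2 : I2 \subset S2 by apply/subsetP => x; rewrite inE => /andP [].
exists (patch S1 f1 f2), w, (I1 :|: I2); split => //.
- exact: (subsetP leS1S).
- by rewrite -S1S2 setUSS.
- apply/indepP => x y; rewrite !in_setU => /orP [xI|xI] /orP [yI|yI].
  + exact: (indepP _ I1_indep).
  + exact: no_edge (subsetP I1S1 _ xI) (subsetP I2S2 _ yI).
  + by rewrite a_sym; apply: no_edge (subsetP I1S1 _ yI) (subsetP I2S2 _ xI).
  + exact: (maximum_exposed_indep a_sym a_irr f2max xI yI).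
have deg_w : deg_in S w = deg_in S1 w.
  apply: eq_card => y; rewrite !inE.
  have [yS1|yS1] := boolP (y \in S1); first by rewrite (subsetP leS1S).
  case yS: (y \in S) => //=; apply/negbTE/no_edge => //.
  by rewrite !inE yS1.
have card_I : #|I1 :|: I2| = #|I1| + #|I2|.
  by rewrite cardsU disjoint_setI0 ?cards0 ?subn0 // (disjointW I1S1 I2S2 S12).
by rewrite fS_exposed deg_w card_I /I2; lia.
Qed.

Lemma exposure_bound_setD1 (S : {set T}) v : v \in S ->
  (forall g, maximum_matching a S g -> g v != v) ->
  exposure_bound (S :\ v) -> exposure_bound S.
Proof.
move=> vS v_covered [f' [w [I [f'S wS' IS' I_indep f'_bound]]]].
have [f fmax] := exists_maximum_matching a S.
have leS'S : S :\ v \subset S by apply: subsetDl.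
have f'S_S := matching_subset f'S leS'S.
have f'_exposed := card_exposed_setD1 vS f'S.
have le_ff' := maximum_matching_min fmax f'S_S.
have odd_ff' : odd #|exposed S f| = odd #|exposed S f'|.
  by rewrite (odd_exposed (maximum_matchingW fmax)) (odd_exposed f'S_S).
have ne_ff' : #|exposed S f| != #|exposed S f'|.
  apply/eqP => eq_ff'.
  have f'max : maximum_matching a S f'.
    apply: maximum_matchingI => // g gS; rewrite -eq_ff'.
    exact: maximum_matching_min fmax gS.
  by have := v_covered f' f'max; rewrite (matching_fixed f'S) ?eqxx // !inE eqxx.
have gap := odd_eq_leq_add2 le_ff' odd_ff' ne_ff'.
have deg_w : deg_in S w <= (deg_in (S :\ v) w).+1.
  rewrite /deg_in (cardsD1 v [set y in S | a w y]) -add1n leq_add ?leq_b1 //.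
  by apply: subset_leq_card; apply/subsetP => y; rewrite !inE andbA.
exists f, w, I; split.
- exact: maximum_matchingW fmax.
- exact: (subsetP leS'S).
- exact: subset_trans IS' leS'S.
- exact: I_indep.
- by move: f'_bound; rewrite f'_exposed in gap; lia.
Qed.

Lemma indep_pair w z : ~~ a w z -> indep [set w; z].
Proof.
move=> wz; apply/indepP => u v; rewrite !inE => /orP [] /eqP -> /orP [] /eqP ->;
  by rewrite ?a_irr ?(a_sym z w).
Qed.

Lemma exists_nonneighbour (S : {set T}) w y : odd #|S| -> w \in S ->
  [set x in S | a w x] = [set y] -> exists2 z, z \in S & (z != w) && ~~ a w z.
Proof.
move=> S_odd wS Nw.
have : y \in [set x in S | a w x] by rewrite Nw inE.
rewrite inE => /andP [yS wy].
have wy' : w != y by apply: contraTneq wy => ->; rewrite a_irr.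
have wyS : [set w; y] \subset S by apply/subsetP => u; rewrite !inE => /orP [] /eqP ->.
have : [set w; y] != S by apply: contraTneq S_odd => <-; rewrite cards2 wy'.
rewrite eqEsubset wyS /= => /subsetPn [z zS]; rewrite !inE negb_or => /andP [zw zy].
exists z; rewrite // zw; apply: contra zy => wz.
have : z \in [set x in S | a w x] by rewrite inE zS wz.
by rewrite Nw inE.
Qed.

Lemma exposure_bound_critical (S : {set T}) : S != set0 -> triangle_free S ->
  (forall x y, x \in S -> y \in S -> connect (adj_in a S) x y) ->
  (forall v, v \in S -> exists g, maximum_matching a S g /\ g v = v) ->
  exposure_bound S.
Proof.
move=> S_ne S_tf S_conn S_missed.
have [f fmax] := exists_maximum_matching a S.
have fS := maximum_matchingW fmax.
have f_exposed := gallai_exposed_le1 a_sym a_irr fmax S_conn S_missed.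
have [w wS] := set0Pn _ S_ne.
set N := [set y in S | a w y].
have N_indep : indep N.
  apply/indepP => y z; rewrite !inE => /andP [yS wy] /andP [zS wz].
  exact: S_tf wS yS zS wy wz.
have NS : N \subset S by apply/subsetP => y; rewrite inE => /andP [].
have [u0|u1] : #|exposed S f| = 0 \/ #|exposed S f| = 1 by lia.
  by exists f, w, N; split => //; rewrite u0 /deg_in -/N; lia.
have S_odd : odd #|S| by rewrite -(odd_exposed fS) u1.
case deg_w : (deg_in S w) => [|[|d]].
- exists f, w, [set w]; split => //.
  + by rewrite sub1set.
  + by apply/indepP => y z; rewrite !inE => /eqP -> /eqP ->; rewrite a_irr.
  + by rewrite u1 deg_w cards1.
- have /cards1P [y Ny] : #|N| == 1 by apply/eqP.
  have [z zS /andP [zw wz]] := exists_nonneighbour S_odd wS Ny.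
  exists f, w, [set w; z]; split => //.
  + by apply/subsetP => u; rewrite !inE => /orP [] /eqP ->.
  + exact: indep_pair.
  + by rewrite u1 deg_w cards2 eq_sym zw.
- exists f, w, N; split => //.
  by change (2 * #|exposed S f| + deg_in S w <= 2 * deg_in S w); rewrite u1 deg_w; lia.
Qed.

Lemma triangle_free_subset (S S' : {set T}) :
  S' \subset S -> triangle_free S -> triangle_free S'.
Proof. by move=> sS'S S_tf x y z xS yS zS; apply: S_tf; apply: (subsetP sS'S). Qed.

Lemma triangle_free_exposure_bound (S : {set T}) :
  S != set0 -> triangle_free S -> exposure_bound S.
Proof.
have [n] := ubnP #|S|; elim: n S => [//|n IH] S /ltnSE leSn S_ne S_tf.
have [|connected] := boolP [exists S1 : {set T}, [&& S1 != set0, S1 \proper S &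
   [forall x in S1, forall y in S :\: S1, ~~ a x y]]].
  case/existsP=> S1 /and3P [S1_ne ltS1S /forall_inP no_edge].
  apply: (exposure_bound_disconnected ltS1S).
    by move=> x y xS1; have /forall_inP := no_edge x xS1; apply.
  apply: IH S1_ne (triangle_free_subset (proper_sub ltS1S) S_tf).
  exact: leq_trans (proper_card ltS1S) leSn.
have [|missed] := boolP [exists v in S, [forall g, maximum_matching a S g ==> (g v != v)]].
  case/exists_inP=> v vS /forallP v_covered.
  have {}v_covered g : maximum_matching a S g -> g v != v.
    by move=> gmax; have := v_covered g; rewrite gmax.
  apply: (exposure_bound_setD1 vS v_covered).
  have S'_lt : #|S :\ v| < n by rewrite (cardsD1 v S) vS in leSn.
  apply: IH S'_lt _ (triangle_free_subset (subsetDl S _) S_tf).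
  have [f fmax] := exists_maximum_matching a S.
  have fv := v_covered f fmax.
  by apply/set0Pn; exists (f v); rewrite !inE fv (matching_image_mem (maximum_matchingW fmax) fv).
apply: exposure_bound_critical => // [x y xS yS | v vS].
  apply/negPn/negP => not_xy.
  move/existsPn: connected => /(_ [set z in S | connect (adj_in a S) x z]).
  rewrite (_ : _ != set0); last by apply/set0Pn; exists x; rewrite inE xS connect0.
  rewrite (_ : _ \proper S) /=; last first.
    apply/properP; split; last by exists y; rewrite // inE yS.
    by apply/subsetP => z; rewrite inE => /andP [].
  case/forall_inP => u; rewrite inE => /andP [uS xu].
  apply/forall_inP => z; rewrite !inE => /andP [not_xz zS]; apply: contra not_xz => uz.
  by rewrite zS; apply: connect_trans xu (connect1 _); rewrite /adj_in uS zS.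
move/exists_inPn: missed => /(_ v vS) /forallPn [g].
by rewrite negb_imply negbK => /andP [gmax /eqP gv]; exists g.
Qed.

End TriangleFree.

Lemma bigmin_leq (I : finType) (P : pred I) (F : I -> nat) x j :
  P j -> \big[minn/x]_(i | P i) F i <= F j.
Proof.
move=> Pj; rewrite -big_filter.
have : j \in [seq i <- index_enum I | P i] by rewrite mem_filter Pj mem_index_enum.
elim: [seq _ <- _ | _] => // i s IH; rewrite inE big_cons => /orP [/eqP <- | /IH].
  exact: geq_minl.
exact: leq_trans (geq_minr _ _).
Qed.

Section Colouring.
Variables (T : finType) (e : rel T).
Hypotheses (e_sym : symmetric e) (e_irr : irreflexive e) (T_ne : 0 < #|T|).

Lemma chi_on_le_card (S : {set T}) : chi_on e S <= #|T|.
Proof.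
apply: (big_ind (fun m => m <= #|T|)) => // [m n le_mT _ | i _].
  exact: leq_trans (geq_minl m n) le_mT.
by rewrite -ltnS.
Qed.

Lemma chi_on_le (S : {set T}) (c : T -> nat) (k : nat) :
  (forall x, x \in S -> c x < k) ->
  (forall x y, x \in S -> y \in S -> e x y -> c x != c y) ->
  chi_on e S <= k.
Proof.
move=> c_lt c_proper.
have [|leTk] := leqP k #|T|; last exact: leq_trans (chi_on_le_card S) (ltnW leTk).
move=> lekT; pose ordT i : 'I_#|T| := insubd (Ordinal T_ne) i.
have ordTE x : x \in S -> ordT (c x) = c x :> nat.
  by move=> xS; rewrite val_insubd (leq_trans (c_lt x xS) lekT).
have S_col : colorable_on e S k.
  apply/existsP; exists [ffun x => ordT (c x)]; apply/andP; split.
    by apply/forall_inP => x xS; rewrite ffunE ordTE ?c_lt.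
  apply/forall_inP => x xS; apply/forall_inP => y yS; apply/implyP => exy.
  by rewrite !ffunE -val_eqE /= !ordTE ?c_proper.
have lekT' : k < #|T|.+1 by [].
exact: (@bigmin_leq _ (fun i : 'I_#|T|.+1 => colorable_on e S i) (fun i => i : nat)
  #|T| (Ordinal lekT') S_col).
Qed.

Lemma chi_on_colorable (S : {set T}) : colorable_on e S (chi_on e S).
Proof.
apply: (big_ind (colorable_on e S)) => // [|m n Sm Sn]; last by rewrite /minn; case: ifP.
apply/existsP; exists [ffun x => enum_rank x]; apply/andP; split.
  by apply/forall_inP => x _; rewrite ffunE.
apply/forall_inP => x _; apply/forall_inP => y _; apply/implyP => exy.
by rewrite !ffunE; apply: contraTneq exy => /enum_rank_inj ->; rewrite e_irr.
Qed.

Lemma chi_on_colouring (S : {set T}) : exists c : T -> nat,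
  (forall x, x \in S -> c x < chi_on e S) /\
  (forall x y, x \in S -> y \in S -> e x y -> c x != c y).
Proof.
have /existsP [f /andP [/forall_inP f_lt /forall_inP f_proper]] := chi_on_colorable S.
exists (fun x => nat_of_ord (f x)); split => // x y xS yS exy.
by have /forall_inP /(_ y yS) /implyP := f_proper x xS; apply.
Qed.

Lemma clique_card_le_omega K : is_clique e K -> #|K| <= omega e.
Proof. by move=> K_clique; rewrite /omega (leq_bigmax_cond _ K_clique). Qed.

Lemma deg_le_Delta x : deg e x <= Delta e.
Proof. exact: leq_bigmax. Qed.

Lemma greedy_colouring (S : {set T}) : exists c : T -> nat,
  (forall x, x \in S -> c x <= Delta e) /\
  (forall x y, x \in S -> y \in S -> e x y -> c x != c y).
Proof.
have [n] := ubnP #|S|; elim: n S => [//|n IH] S /ltnSE leSn.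
have [->|[v vS]] := set_0Vmem S; first by exists (fun _ => 0); split => // x; rewrite inE.
have [|c' [c'_le c'_proper]] := IH (S :\ v); first by rewrite (cardsD1 v S) vS in leSn.
set U := [seq c' y | y <- enum [set y in S :\ v | e v y]].
have size_U : size U <= Delta e.
  rewrite size_map -cardE; apply: leq_trans (deg_le_Delta v).
  by apply: subset_leq_card; apply/subsetP => y; rewrite !inE => /andP [_ ->].
have [j j_le jU] : exists2 j, j <= Delta e & j \notin U.
  have : ~~ all (fun j => j \in U) (iota 0 (Delta e).+1).
    apply/negP => /allP sub_U.
    have := uniq_leq_size (iota_uniq 0 (Delta e).+1) sub_U.
    by rewrite size_iota ltnNge size_U.
  by case/allPn => j; rewrite mem_iota add0n ltnS => /andP [_ j_le] jU; exists j.
have c'U y : y \in S -> y != v -> e v y -> c' y \in U.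
  by move=> yS yv vy; apply/mapP; exists y; rewrite // mem_enum !inE yv yS.
exists (fun x => if x == v then j else c' x); split.
  by move=> x xS; case: eqP => // /eqP xv; apply: c'_le; rewrite !inE xv.
move=> x y xS yS exy.
case: (eqVneq x v) => [xv|xv]; case: (eqVneq y v) => [yv|yv].
- by rewrite xv yv e_irr in exy.
- by rewrite xv in exy; apply: contraNneq jU => ->; apply: c'U.
- by rewrite yv e_sym in exy; apply: contraNneq jU => <-; apply: c'U.
- by apply: c'_proper; rewrite // !inE ?xv ?yv.
Qed.

Lemma chi_on_le_Delta (S : {set T}) : chi_on e S <= (Delta e).+1.
Proof.
have [c [c_le c_proper]] := greedy_colouring S.
by apply: (chi_on_le (c := c)) => // x xS; rewrite ltnS c_le.
Qed.

Lemma chi_le_add_compl (H : {set T}) : chi e <= chi_on e H + chi_on e (~: H).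
Proof.
have [c [c_lt c_proper]] := chi_on_colouring H.
have [d [d_lt d_proper]] := chi_on_colouring (~: H).
pose k := chi_on e H.
apply: (chi_on_le (c := fun v => if v \in H then c v else k + d v)).
  move=> v _; case: ifP => vH; first exact: leq_trans (c_lt v vH) (leq_addr _ _).
  by rewrite ltn_add2l d_lt // inE vH.
move=> u v _ _ euv; case: ifP => uH; case: ifP => vH.
- exact: c_proper.
- by rewrite neq_ltn (leq_trans (c_lt u uH) (leq_addr _ _)).
- by rewrite neq_ltn (leq_trans (c_lt v vH) (leq_addr _ _)) orbT.
- by rewrite eqn_add2l d_proper ?inE ?uH ?vH.
Qed.

End Colouring.

Section Alpha2.
Variables (T : finType) (e : rel T).
Hypotheses (e_sym : symmetric e) (e_irr : irreflexive e) (T_ne : 0 < #|T|).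

Definition nonadj : rel T := fun x y => (x != y) && ~~ e x y.

Lemma nonadj_sym : symmetric nonadj.
Proof. by move=> x y; rewrite /nonadj eq_sym e_sym. Qed.

Lemma nonadj_irr : irreflexive nonadj.
Proof. by move=> x; rewrite /nonadj eqxx. Qed.

(* The complement of G[F] is triangle-free; colour G[F] by a matching of the
   complement and use the exposure bound, whose independent set is a clique
   of G. *)
Lemma chi_on_no_indep_triple (F : {set T}) : F != set0 ->
  (forall x y z, x \in F -> y \in F -> z \in F -> x != y -> x != z -> y != z ->
     [|| e x y, e x z | e y z]) ->
  exists2 w, w \in F &
    4 * chi_on e F <= 2 * omega e + #|F| + 1 + #|[set y in F | e w y]|.
Proof.
move=> F_ne F_no_triple.
have F_tf : triangle_free nonadj F.
  move=> x y z xF yF zF /andP [xy not_xy] /andP [xz not_xz]; rewrite /nonadj negb_and !negbK.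
  case: (eqVneq y z) => [//|yz] /=; have := F_no_triple x y z xF yF zF xy xz yz.
  by rewrite (negbTE not_xy) (negbTE not_xz).
have [f [w [I [fF wF IF I_indep f_bound]]]] :=
  triangle_free_exposure_bound nonadj_sym nonadj_irr F_ne F_tf.
exists w => //.
have I_clique : is_clique e I.
  apply/forall_inP => x xI; apply/forall_inP => y yI; apply/implyP => xy.
  by have := indepP _ _ I_indep x y xI yI; rewrite /nonadj xy negbK.
have I_omega := clique_card_le_omega I_clique.
have [c [c_lt c_classes]] := matching_labelling fF.
have chi_F : chi_on e F <= #|exposed F f| + #|matched_reps F f|.
  apply: (chi_on_le T_ne (c := c)) => // x y xF yF exy; apply/eqP => cxy.
  case: (c_classes x y xF yF cxy) => [xy|yfx]; first by rewrite xy e_irr in exy.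
  have fx : f x != x by rewrite -yfx; apply: contraTneq exy => ->; rewrite e_irr.
  by move: (matching_adj fF fx); rewrite -yfx /nonadj exy andbF.
have card_F := card_matching fF.
have deg_split : #|F| = #|[set y in F | e w y]| + #|[set y in F | ~~ e w y]|.
  rewrite -(cardsID [set y | e w y] F); congr (_ + _);
    by apply: eq_card => y; rewrite !inE andbC.
have nondeg : #|[set y in F | ~~ e w y]| = (deg_in nonadj F w).+1.
  rewrite (cardsD1 w) !inE wF e_irr add1n; congr _.+1.
  apply: eq_card => y; rewrite !inE /nonadj.
  by case: (y \in F); rewrite ?andbF ?andbT // eq_sym.
lia.
Qed.

End Alpha2.

Section Excess.
Variables (T : finType) (e : rel T).

Definition excess (S : {set T}) : int := (#|S|%:Z - 3 * (chi_on e S)%:Z)%R.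

Lemma excess_le (S1 S2 : {set T}) :
  (excess S1 <= excess S2)%R = (#|S1| + 3 * chi_on e S2 <= #|S2| + 3 * chi_on e S1).
Proof. by rewrite /excess; apply/idP/idP; lia. Qed.

Lemma excess_le_eta (S : {set T}) : S != set0 -> (excess S <= eta e)%R.
Proof. exact: (Order.TotalTheory.le_bigmax_cond _ excess). Qed.

Lemma exists_extremal : 0 < #|T| -> exists H : {set T},
  [/\ H != set0, excess H = eta e &
      forall S, S != set0 -> excess S = eta e -> #|S| <= #|H|].
Proof.
move=> T_ne; have [S0 [S0_ne S0_eta]] : exists S, S != set0 /\ eta e = excess S.
  apply: (big_ind (fun m : int => exists S, S != set0 /\ m = excess S)).
  - exists setT; split; last by rewrite /excess cardsT.
    by rewrite -card_gt0 cardsT.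
  - move=> _ _ [S1 [S1_ne ->]] [S2 [S2_ne ->]].
    by case: (Order.TotalTheory.leP (excess S1) (excess S2)); [exists S2 | exists S1].
  - by move=> S S_ne; exists S.
have P0 : (S0 != set0) && (excess S0 == eta e) by rewrite S0_ne S0_eta eqxx.
case: (@arg_maxnP _ S0 (fun S => (S != set0) && (excess S == eta e)) (fun S => #|S|) P0)
  => H /andP [H_ne /eqP H_eta] H_max.
exists H; split => // S S_ne S_eta; apply: H_max.
by rewrite S_ne S_eta eqxx.
Qed.

End Excess.

Section Extremal.
Variables (T : finType) (e : rel T).
Hypotheses (e_sym : symmetric e) (e_irr : irreflexive e) (T_ne : 0 < #|T|).
Variable H : {set T}.
Hypothesis H_eta : excess e H = eta e.
Hypothesis H_max : forall S, S != set0 -> excess e S = eta e -> #|S| <= #|H|.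

Lemma extremal_sees_colours (c : T -> nat) w j :
  (forall x, x \in H -> c x < chi_on e H) ->
  (forall x y, x \in H -> y \in H -> e x y -> c x != c y) ->
  w \notin H -> j < chi_on e H -> exists2 x, x \in H & e w x && (c x == j).
Proof.
move=> c_lt c_proper wH j_lt.
have [/exists_inP [x xH wx]|no_j] := boolP [exists x in H, e w x && (c x == j)].
  by exists x.
pose c' y := if y == w then j else c y.
have chi_wH : chi_on e (w |: H) <= chi_on e H.
  apply: (chi_on_le T_ne (c := c')).
    by move=> y; rewrite !inE /c'; case: eqP => //= _; apply: c_lt.
  move=> y z; rewrite !inE /c' => yH zH eyz.
  case: (eqVneq y w) => [yw|yw]; case: (eqVneq z w) => [zw|zw] /=.
  - by rewrite yw zw e_irr in eyz.
  - rewrite (negbTE zw) in zH; apply: contraNneq no_j => j_cz.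
    by apply/exists_inP; exists z => //; rewrite -yw eyz j_cz eqxx.
  - rewrite (negbTE yw) in yH; apply: contraNneq no_j => cy_j.
    by apply/exists_inP; exists y => //; rewrite -zw e_sym eyz cy_j eqxx.
  - by rewrite (negbTE yw) in yH; rewrite (negbTE zw) in zH; apply: c_proper.
have wH_ne : w |: H != set0 by apply/set0Pn; exists w; rewrite !inE eqxx.
have := excess_le_eta e wH_ne; rewrite -H_eta excess_le cardsU1 wH.
by move: chi_wH; lia.
Qed.

Lemma extremal_deg w :
  w \notin H -> chi_on e H + #|[set y in ~: H | e w y]| <= deg e w.
Proof.
move=> wH; have [c [c_lt c_proper]] := chi_on_colouring e_irr H.
set A := [set y in H | e w y].
have chi_A : chi_on e H <= #|A|.
  pose pick_col (j : 'I_(chi_on e H)) := odflt w [pick x in A | c x == j].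
  have pick_colP (j : 'I_(chi_on e H)) : pick_col j \in A /\ c (pick_col j) = j.
    rewrite /pick_col; case: pickP => [x /andP [xA /eqP cx] | none] //=.
    have [x xH /andP [wx cx]] := extremal_sees_colours c_lt c_proper wH (ltn_ord j).
    by move: (none x); rewrite !inE xH wx cx.
  have pick_col_inj : injective pick_col.
    move=> i j eq_ij; apply/val_inj.
    by rewrite /= -(proj2 (pick_colP i)) eq_ij (proj2 (pick_colP j)).
  rewrite -[chi_on e H]card_ord -(card_imset _ pick_col_inj); apply: subset_leq_card.
  by apply/subsetP => x /imsetP [j _ ->]; case: (pick_colP j).
apply: leq_trans (_ : #|A :|: [set y in ~: H | e w y]| <= _).
  rewrite cardsU disjoint_setI0 ?cards0 ?subn0 ?leq_add2r //.
  by rewrite disjoints_subset; apply/subsetP => x; rewrite !inE => /andP [->].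
by apply: subset_leq_card; apply/subsetP => x; rewrite !inE => /orP [] /andP [].
Qed.

Lemma extremal_no_indep_triple x y z : x \notin H -> y \notin H -> z \notin H ->
  x != y -> x != z -> y != z -> [|| e x y, e x z | e y z].
Proof.
move=> xH yH zH xy xz yz; apply/negPn/negP => /norP [nxy /norP [nxz nyz]].
set X := [set x; y; z].
have X_indep u v : u \in X -> v \in X -> ~~ e u v.
  rewrite !inE => /orP [/orP [] | ] /eqP -> /orP [/orP [] | ] /eqP ->;
    by rewrite ?e_irr // ?(e_sym y x) ?(e_sym z x) ?(e_sym z y).
have [c [c_lt c_proper]] := chi_on_colouring e_irr H.
set k := chi_on e H.
have chi_XH : chi_on e (X :|: H) <= k.+1.
  apply: (chi_on_le T_ne (c := fun v => if v \in H then c v else k)).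
    by move=> v _; case: ifP => [vH|//]; apply: ltnW (c_lt v vH).
  move=> u v; rewrite in_setU => uXH; rewrite in_setU => vXH euv.
  case: ifP => uH; case: ifP => vH.
  - exact: c_proper.
  - by rewrite neq_ltn c_lt.
  - by rewrite neq_ltn c_lt ?orbT.
  - by move: uXH vXH; rewrite uH vH !orbF => uX vX; move: (X_indep u v uX vX); rewrite euv.
have card_XH : #|X :|: H| = #|H| + 3.
  rewrite cardsU disjoint_setI0 ?cards0 ?subn0; last first.
    by rewrite disjoints_subset; apply/subsetP => v; rewrite !inE => /orP [/orP []|] /eqP ->.
  by rewrite addnC /X -setUA cardsU1 !inE negb_or xy xz cards2 yz.
have XH_ne : X :|: H != set0 by apply/set0Pn; exists x; rewrite !inE eqxx.
have XH_eta : excess e (X :|: H) = eta e.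
  apply/eqP; rewrite Order.POrderTheory.eq_le excess_le_eta //= -H_eta excess_le card_XH.
  by move: chi_XH; lia.
by have := H_max XH_ne XH_eta; rewrite card_XH; lia.
Qed.

Lemma extremal_bound :
  4 * chi e + #|H| <= 2 * omega e + Delta e + 1 + #|T| + 3 * chi_on e H.
Proof.
have card_T : #|T| = #|H| + #|~: H| by rewrite cardsC.
have [F0|F_ne] := eqVneq (~: H) set0.
  have HT : H = setT by rewrite -[H]setCK F0 setC0.
  have := chi_on_le_Delta e_sym e_irr T_ne H.
  by rewrite /chi -HT; lia.
have F_no_triple x y z : x \in ~: H -> y \in ~: H -> z \in ~: H ->
    x != y -> x != z -> y != z -> [|| e x y, e x z | e y z].
  by rewrite !inE; apply: extremal_no_indep_triple.
have [w wF w_bound] := chi_on_no_indep_triple e_sym e_irr T_ne F_ne F_no_triple.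
have := chi_le_add_compl e_irr T_ne H.
have := deg_le_Delta e w; have := extremal_deg (w := w).
by rewrite inE in wF; move/(_ wF); lia.
Qed.

End Extremal.

Local Open Scope ring_scope.

Theorem corollary11 (T : finType) (e : rel T)
  (e_sym : symmetric e) (e_irr : irreflexive e) (T_nonempty : (0 < #|T|)%N)
  : (chi e)%:R <=
      (1 / 2 : rat) * ((omega e)%:R + ((Delta e)%:R + 1 + (#|T|)%:R) / 2)
      - (eta e)%:~R / 4.
Proof.
have [H [_ H_eta H_max]] := exists_extremal e T_nonempty.
have := extremal_bound e_sym e_irr T_nonempty H_eta H_max.
by rewrite -(ler_nat rat) -H_eta /excess; lra.
Qed.
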